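(* Let $\mathcal{A}=\langle\Sigma,Q,Q_0,\delta,\alpha\rangle$ be a GFG automaton and let $g=\langle\Sigma,Q,M,m_0,\rho,\tau\rangle$ be a finite-state strategy (transducer) witnessing its GFGness. Then: (1) for every state $q\in Q$ and every memory $m\in M$ of $q$ (i.e. $\tau(m)=q$) that is reachable in $\mathcal{A}_g$, we have $L(\mathcal{A}_g^m)=L(\mathcal{A}^q)$; (2) for all memories $m,m'\in M$ that are reachable in $\mathcal{A}_g$ with $\tau(m)=\tau(m')$, we have $L(\mathcal{A}_g^m)=L(\mathcal{A}_g^{m'})$.
   Context: An automaton is $\mathcal{A}=\langle\Sigma,Q,Q_0,\delta,\alpha\rangle$ with finite alphabet $\Sigma$, finite state set $Q$, initial states $Q_0\subseteq Q$, transition function $\delta:Q\times\Sigma\to 2^Q$ and an acceptance condition $\alpha$ (Büchi, co-Büchi, parity, Rabin or Streett). A run on $w=a_1a_2\cdots$ is $r_0r_1\cdots$ with $r_0\in Q_0$ and $r_{i+1}\in\delta(r_i,a_{i+1})$; it is accepting if the set $\inf(r)$ of states visited infinitely often satisfies $\alpha$; $L(\mathcal{A})$ is the set of words with an accepting run. $\mathcal{A}^q$ is $\mathcal{A}$ with initial state set $\{q\}$. $\mathcal{A}$ is good for games (GFG) if there is a strategy $g:\Sigma^*\to Q$ such that for every $w=a_1a_2\cdots$, the sequence $g(\epsilon),g(a_1),g(a_1a_2),\ldots$ is a run of $\mathcal{A}$ on $w$ that is accepting whenever $w\in L(\mathcal{A})$; $g$ then witnesses $\mathcal{A}$'s GFGness.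 A finite-state strategy is given by a transducer $\langle\Sigma,Q,M,m_0,\rho,\tau\rangle$ with finite memory set $M$, initial memory $m_0$, update $\rho:M\times\Sigma\to M$ (extended to words by $\rho(\epsilon)=m_0$, $\rho(ua)=\rho(\rho(u),a)$) and output $\tau:M\to Q$, generating $g(u)=\tau(\rho(u))$. A memory $m$ with $\tau(m)=q$ is a memory of $q$. $\mathcal{A}_g=\langle\Sigma,M,m_0,\rho,\alpha_g\rangle$ is the deterministic automaton where $\alpha_g$ is obtained from $\alpha$ by replacing every set $F\subseteq Q$ occurring in $\alpha$ by $\{m\mid\tau(m)\in F\}$ (for parity, $m$ gets the priority of $\tau(m)$); $\mathcal{A}_g^m$ is $\mathcal{A}_g$ with initial memory $m$. *)

From mathcomp Require Import all_boot.
Set Implicit Arguments. Unset Strict Implicit. Unset Printing Implicit Defensive.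

Inductive acc_cond (Q : finType) : Type :=
  | Buchi of {set Q}
  | CoBuchi of {set Q}
  | Parity of (Q -> nat)
  | Rabin of seq ({set Q} * {set Q})
  | Streett of seq ({set Q} * {set Q}).

(* Infinite words / runs are functions nat -> _ ; w i is the letter a_{i+1}. *)
Definition word (S : Type) := nat -> S.

Definition inf_set (Q : Type) (r : nat -> Q) (q : Q) : Prop :=
  forall n, exists2 k, n <= k & r k = q.

Definition meets (Q : finType) (r : nat -> Q) (F : {set Q}) : Prop :=
  exists2 q, inf_set r q & q \in F.

Definition satisfies (Q : finType) (a : acc_cond Q) (r : nat -> Q) : Prop :=
  match a with
  | Buchi F => meets r F
  | CoBuchi F => ~ meets r F
  | Parity p => exists q, [/\ inf_set r q, ~~ odd (p q) &
                    forall q', inf_set r q' -> p q <= p q']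
  | Rabin pairs => exists2 EF, EF \in pairs & ~ meets r EF.1 /\ meets r EF.2
  | Streett pairs => forall EF, EF \in pairs -> meets r EF.2 -> meets r EF.1
  end.

Record automaton (S Q : finType) := Automaton {
  init : {set Q};
  delta : Q -> S -> {set Q};
  alpha : acc_cond Q }.

Definition is_run (S Q : finType) (A : automaton S Q) (w : word S) (r : nat -> Q) :=
  r 0 \in init A /\ forall i, r i.+1 \in delta A (r i) (w i).

Definition accepting (S Q : finType) (A : automaton S Q) (r : nat -> Q) :=
  satisfies (alpha A) r.

Definition lang (S Q : finType) (A : automaton S Q) (w : word S) : Prop :=
  exists r, is_run A w r /\ accepting A r.

Definition from (S Q : finType) (A : automaton S Q) (q : Q) : automaton S Q :=
  Automaton [set q] (delta A) (alpha A).

Definition prefix (S : Type) (w : word S) (i : nat) : seq S := mkseq w i.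

Definition witnesses_gfg (S Q : finType) (A : automaton S Q) (g : seq S -> Q) : Prop :=
  forall w : word S, is_run A w (fun i => g (prefix w i)) /\
    (lang A w -> accepting A (fun i => g (prefix w i))).

Definition is_gfg (S Q : finType) (A : automaton S Q) : Prop :=
  exists g, witnesses_gfg A g.

Record transducer (S Q : finType) := Transducer {
  memT : finType;
  m0 : memT;
  rho : memT -> S -> memT;
  tau : memT -> Q }.
Arguments m0 {S Q} t.
Arguments rho {S Q} t _ _.
Arguments tau {S Q} t _.

Definition rho_star (S Q : finType) (T : transducer S Q) (u : seq S) : memT T :=
  foldl (rho T) (m0 T) u.

Definition strat (S Q : finType) (T : transducer S Q) : seq S -> Q :=
  fun u => tau T (rho_star T u).

Definition map_acc (Q M : finType) (t : M -> Q) (a : acc_cond Q) : acc_cond M :=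
  let pre := fun F : {set Q} => [set m | t m \in F] in
  match a with
  | Buchi F => Buchi (pre F)
  | CoBuchi F => CoBuchi (pre F)
  | Parity p => Parity (fun m => p (t m))
  | Rabin ps => Rabin [seq (pre EF.1, pre EF.2) | EF <- ps]
  | Streett ps => Streett [seq (pre EF.1, pre EF.2) | EF <- ps]
  end.

Definition A_g (S Q : finType) (A : automaton S Q) (T : transducer S Q)
  : automaton S (memT T) :=
  Automaton [set m0 T] (fun m a => [set rho T m a]) (map_acc (tau T) (alpha A)).

Definition reachable (S Q : finType) (T : transducer S Q) (m : memT T) : Prop :=
  exists u : seq S, rho_star T u = m.
Arguments reachable {S Q} T m.
Arguments rho_star {S Q} T u.
Arguments strat {S Q} T u.
Arguments A_g {S Q} A T.

(** If [m] is reached by reading [u], the run of [A_g^m] on [w], read through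
    [tau], is the tail of the strategy's run on [u w], and this tail is a run
    of [A^q] on [w] for [q = g(u) = tau m].  Conversely, if [A^q] accepts [w],
    splicing an accepting run after the strategy's run on [u] shows [u w] in
    [L(A)], so the strategy's run on [u w], hence its tail, is accepting.
    Acceptance transfers through [tau] because, [M] being finite, [tau] maps
    the memories visited infinitely often onto the states visited infinitely
    often by the image run. *)

From Pilot Require Import Defs.
From mathcomp Require Import all_boot.
From mathcomp Require Import zify.
From Stdlib Require Import Classical.

Set Implicit Arguments. Unset Strict Implicit.

Section InfiniteSets.

Variable Q : Type.

Lemma eq_inf_set (r r' : nat -> Q) q : r =1 r' -> inf_set r q <-> inf_set r' q.
Proof.
by move=> eq_r; split=> r_inf n; have [k le_nk <-] := r_inf n; exists k.
Qed.

Lemma inf_set_shift (r : nat -> Q) k q :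
  inf_set (fun i => r (k + i)) q <-> inf_set r q.
Proof.
split=> r_inf n.
- by have [j le_nj <-] := r_inf n; exists (k + j); first lia.
- have [j le_kn_j <-] := r_inf (k + n).
  by exists (j - k); [lia | rewrite subnKC //; lia].
Qed.

End InfiniteSets.

Lemma inf_set_comp (M Q : finType) (t : M -> Q) (r : nat -> M) q :
  inf_set (fun i => t (r i)) q <-> exists2 m, t m = q & inf_set r m.
Proof.
split; last by move=> [m <- r_inf] n; have [k le_nk <-] := r_inf n; exists k.
move=> tr_inf; apply: NNPP => no_m.
have /fin_all_exists[N N_bound] :
    forall m, exists N, forall k, N <= k -> r k = m -> t m <> q.
  move=> m.
  have [tm_q|tm_q] := classic (t m = q); last by exists 0.
  have /not_all_ex_not[n not_after_n] : ~ (forall n, exists2 k, n <= k & r k = m).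
    by move=> m_inf; apply: no_m; exists m.
  by exists n => k le_nk rk_m; case: not_after_n; exists k.
have [k le_k tk_q] := tr_inf (\max_m N m).
exact: N_bound (leq_trans (leq_bigmax (r k)) le_k) erefl tk_q.
Qed.

Section Acceptance.

Variable Q : finType.

Lemma satisfies_inf_set (a : acc_cond Q) (r r' : nat -> Q) :
  (forall q, inf_set r q <-> inf_set r' q) -> satisfies a r -> satisfies a r'.
Proof.
move=> eq_inf.
have meetsE F : meets r F <-> meets r' F.
  by split=> -[q q_inf qF]; exists q => //; apply/eq_inf.
case: a => [F|F|p|ps|ps] /=.
- by move/meetsE.
- by move=> not_meets /meetsE.
- move=> [q [q_inf even_q q_min]]; exists q; split=> [|//|q' /eq_inf]; first exact/eq_inf.
  exact: q_min.
- by move=> [EF EF_ps [/meetsE E1 /meetsE E2]]; exists EF.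
- by move=> ps_sat EF EF_ps /meetsE /(ps_sat EF EF_ps) /meetsE.
Qed.

Lemma eq_satisfies (a : acc_cond Q) (r r' : nat -> Q) :
  r =1 r' -> satisfies a r -> satisfies a r'.
Proof. by move=> eq_r; apply: satisfies_inf_set => q; apply: eq_inf_set. Qed.

Lemma satisfies_shift (a : acc_cond Q) (r : nat -> Q) k :
  satisfies a (fun i => r (k + i)) <-> satisfies a r.
Proof.
by split; apply: satisfies_inf_set => q; [|symmetry]; apply: inf_set_shift.
Qed.

End Acceptance.

Lemma meets_preimset (M Q : finType) (t : M -> Q) (r : nat -> M) (F : {set Q}) :
  meets r [set m | t m \in F] <-> meets (fun i => t (r i)) F.
Proof.
split=> [[m m_inf]|[q /inf_set_comp[m tm_q m_inf] qF]].
- by rewrite inE => tmF; exists (t m) => //; apply/inf_set_comp; exists m.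
- by exists m; rewrite // inE tm_q.
Qed.

Lemma satisfies_map_acc (M Q : finType) (t : M -> Q) (a : acc_cond Q) (r : nat -> M) :
  satisfies (map_acc t a) r <-> satisfies a (fun i => t (r i)).
Proof.
pose pre (EF : {set Q} * {set Q}) := ([set m | t m \in EF.1], [set m | t m \in EF.2]).
case: a => [F|F|p|ps|ps] /=.
- exact: meets_preimset.
- by rewrite meets_preimset.
- split=> [[m [m_inf even_m m_min]]|[q [/inf_set_comp[m tm_q m_inf] even_q q_min]]].
  + exists (t m); split=> [|//|q' /inf_set_comp[m' <-]]; last exact: m_min.
    by apply/inf_set_comp; exists m.
  + exists m; split=> [//|| m' m'_inf]; rewrite tm_q //.
    by apply: q_min; apply/inf_set_comp; exists m'.
- split=> [[_ /mapP[EF EF_ps ->]]|[EF EF_ps]].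
  + by rewrite /= !meets_preimset; exists EF.
  + by exists (pre EF); rewrite /= ?map_f ?meets_preimset.
- split=> [ps_sat EF EF_ps|ps_sat _ /mapP[EF EF_ps ->]].
  + by rewrite -!meets_preimset; apply: (ps_sat (pre EF)); apply: map_f.
  + by rewrite /= !meets_preimset; apply: ps_sat.
Qed.

Section Words.

Variable S : Type.

Definition catw (u : seq S) (w : word S) : word S :=
  fun i => if i < size u then nth (w 0) u i else w (i - size u).

Lemma catw_addn (u : seq S) (w : word S) i : catw u w (size u + i) = w i.
Proof. by rewrite /catw ltnNge leq_addr addKn. Qed.

Lemma prefix_catw (u : seq S) (w : word S) k :
  Defs.prefix (catw u w) (size u + k) = u ++ Defs.prefix w k.
Proof.
apply: (@eq_from_nth _ (w 0)) => [|j]; first by rewrite size_cat !size_mkseq.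
rewrite size_mkseq => lt_j; rewrite nth_mkseq // nth_cat /catw.
by case: ifP => // ge_j; rewrite nth_mkseq //; lia.
Qed.

Lemma prefixS (w : word S) k : Defs.prefix w k.+1 = rcons (Defs.prefix w k) (w k).
Proof. exact: mkseqS. Qed.

End Words.

Section GoodForGames.

Variables (S Q : finType) (A : automaton S Q) (g : seq S -> Q).

Lemma is_run_splice (u : seq S) (w : word S) (s r : nat -> Q) :
  is_run A (catw u w) s -> is_run (from A (s (size u))) w r ->
  is_run A (catw u w) (fun i => if i < size u then s i else r (i - size u)).
Proof.
move=> [s0 s_step] [/set1P r0 r_step]; split=> [|i].
  case: ifP => // /negbT; rewrite -eqn0Ngt => /eqP u0.
  by rewrite u0 r0 u0.
have [lt_iu|ge_iu] := ltnP i (size u).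
  case: ltnP => [_|le_u_Si]; first exact: s_step.
  have eq_u : size u = i.+1 by lia.
  by rewrite eq_u subnn r0 eq_u; apply: s_step.
rewrite ltnNge ltnW //= subSn // {1}/catw ltnNge ge_iu.
exact: r_step.
Qed.

Hypothesis g_gfg : witnesses_gfg A g.

Lemma lang_from_strategy (u : seq S) (w : word S) :
  lang (from A (g u)) w <->
  accepting A (fun i => g (Defs.prefix (catw u w) (size u + i))).
Proof.
set s := fun i => g (Defs.prefix (catw u w) i).
have [s_run s_acc] := g_gfg (catw u w).
have s_u : s (size u) = g u by rewrite /s -[size u]addn0 prefix_catw cats0.
split=> [[r [r_run r_acc]]|tail_acc].
  apply/(satisfies_shift _ s); apply: s_acc.
  exists (fun i => if i < size u then s i else r (i - size u)); split.
    by apply: is_run_splice; rewrite ?s_u.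
  apply/(satisfies_shift _ _ (size u)); apply: (eq_satisfies _ r_acc) => i.
  by rewrite ltnNge leq_addr addKn.
exists (fun i => s (size u + i)); split=> //; split=> [|i]; first by rewrite inE addn0 s_u.
by rewrite -(catw_addn u w i) addnS; apply: s_run.2.
Qed.

End GoodForGames.

Section Transducer.

Variables (S Q : finType) (A : automaton S Q) (T : transducer S Q).

Definition mem_run (m : memT T) (w : word S) : nat -> memT T :=
  fun i => foldl (rho T) m (Defs.prefix w i).

Lemma is_run_A_g_from m w r : is_run (from (A_g A T) m) w r <-> r =1 mem_run m w.
Proof.
split=> [[/set1P r0 r_step]|eq_r]; last first.
  by split=> [|i]; rewrite !eq_r ?inE // /mem_run prefixS foldl_rcons.
elim=> [|i IHi]; first exact: r0.
by have /set1P-> := r_step i; rewrite IHi /mem_run prefixS foldl_rcons.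
Qed.

Lemma lang_A_g_from m w :
  lang (from (A_g A T) m) w <-> satisfies (alpha A) (fun i => tau T (mem_run m w i)).
Proof.
split=> [[r [/is_run_A_g_from eq_r /satisfies_map_acc r_acc]]|run_acc].
  by apply: (eq_satisfies _ r_acc) => i; rewrite eq_r.
by exists (mem_run m w); split; [apply/is_run_A_g_from | apply/satisfies_map_acc].
Qed.

Lemma mem_run_rho_star u w i :
  mem_run (rho_star T u) w i = rho_star T (Defs.prefix (catw u w) (size u + i)).
Proof. by rewrite /rho_star prefix_catw foldl_cat. Qed.

End Transducer.

Theorem lemma2 (S Q : finType) (A : automaton S Q) (T : transducer S Q) :
  is_gfg A -> witnesses_gfg A (strat T) ->
  (forall (q : Q) (m : memT T), tau T m = q -> reachable T m ->
     forall w : word S, lang (from (A_g A T) m) w <-> lang (from A q) w) /\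
  (forall m m' : memT T, reachable T m -> reachable T m' -> tau T m = tau T m' ->
     forall w : word S, lang (from (A_g A T) m) w <-> lang (from (A_g A T) m') w).
Proof.
move=> _ strat_gfg.
have lang_A_g q m : tau T m = q -> reachable T m ->
    forall w, lang (from (A_g A T) m) w <-> lang (from A q) w.
  move=> <- [u <-] w.
  rewrite lang_A_g_from (lang_from_strategy strat_gfg u w).
  by split; apply: eq_satisfies => i; rewrite mem_run_rho_star.
split=> // m m' reach_m reach_m' eq_tau w.
by rewrite (lang_A_g _ _ erefl reach_m) (lang_A_g _ _ (esym eq_tau) reach_m').
Qed.
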